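(* Fix a static price vector $\boldsymbol{\phi}=(\phi_1,\phi_2)\in[0,\phi_h]^2$ with $\phi_1\ge\phi_2$ (the case $\phi_1<\phi_2$ follows by exchanging the roles of the two platforms). For $\beta>0$ let $W(\beta)=\lambda_1(\boldsymbol{\phi};\beta)$ denote the (unique) Wardrop-equilibrium passenger arrival rate of platform 1, and let $\mathcal{M}_i(\boldsymbol{\phi};\beta)$ denote the matching revenue rate of platform $i$ evaluated at this Wardrop split. Let $\underline{\phi}=f^{-1}(2e/\Lambda)$ and $\bar{\phi}=f^{-1}(e/\Lambda)$ (each set to $0$ when not in range), and $m(\phi)=(\Lambda f(\phi)-e)\phi$. Define $W(0)=\tilde\lambda_1(\boldsymbol{\phi})$ and $\mathcal{M}_i(\boldsymbol{\phi};0)=\tilde{\mathcal{M}}_i(\boldsymbol{\phi})$ by: (a) if $\phi_1<\underline{\phi}$ (and $\phi_1\ge\phi_2$): $\tilde\lambda_1=\Lambda/2$, $\tilde{\mathcal{M}}_1=e\phi_1$, $\tilde{\mathcal{M}}_2=e\phi_2$; (b) if $\phi_1\in[\underline{\phi},\bar{\phi})$ and $\phi_1>\phi_2$: $\tilde\lambda_1=\Lambda-e/f(\phi_1)$, $\tilde{\mathcal{M}}_1=m(\phi_1)$, $\tilde{\mathcal{M}}_2=e\phi_2$; (c) if $\phi_1\in[\bar{\phi},\phi_h]$ and $\phi_1>\phi_2$: $\tilde\lambda_1=0$, $\tilde{\mathcal{M}}_1=0$, $\tilde{\mathcal{M}}_2=\min\{\Lambda f(\phi_2),e\}\phi_2$;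 (d) if $\phi_1=\phi_2\in[\underline{\phi},\phi_h]$: $\tilde\lambda_1=\Lambda/2$, $\tilde{\mathcal{M}}_i=\frac{\Lambda}{2}f(\phi_i)\phi_i$ for $i=1,2$. Then the mapping $\beta\mapsto W(\beta)$ is continuous on $[0,\infty)$, and likewise, for each $i$, the mapping $\beta\mapsto\mathcal{M}_i(\boldsymbol{\phi};\beta)$ is continuous on $[0,\infty)$.
   Context: Two symmetric ride-hailing platforms $i\in\{1,2\}$. Passengers arrive as a Poisson process of total rate $\Lambda$, split into Poisson streams of rates $\lambda_1+\lambda_2=\Lambda$. Each platform uses a static price $\phi_i\in[0,\phi_h]$; an arriving passenger finding a waiting driver accepts with probability $f(\phi_i)$, where $f$ is strictly concave, strictly decreasing, differentiable, $0<f\le 1$ on $[0,\phi_h]$ and $f(0)=1$. Drivers have effective arrival rate $e=\eta/(1-p)$ (same on both platforms) and each waiting driver abandons at rate $\beta>0$. The probability of no waiting driver is $\mathcal{D}_i=\big(\sum_{n\ge0} e^n/\prod_{a=1}^n(\lambda_i f(\phi_i)+a\beta)\big)^{-1}$, the combined blocking probability is $\mathcal{B}_i=\mathcal{D}_i f(\phi_i)+1-f(\phi_i)$, and the matching revenue rate is $\mathcal{M}_i=\lambda_i f(\phi_i)\phi_i(1-\mathcal{D}_i)$. The passenger split is the Wardrop equilibrium under QoS $\mathcal{B}$: $\lambda_1\in\arg\min_{\lambda\in[0,\Lambda]}(\mathcal{B}_1(\lambda)-\mathcal{B}_2(\Lambda-\lambda))^2$, $\lambda_2=\Lambda-\lambda_1$,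 which is unique for $\beta>0$.
   Formalization: $\underline{\phi}$ equals $\phi_h+1$ rather than 0 when $2e/\Lambda<f(\phi_h)$, and likewise $\bar{\phi}$ equals $\phi_h+1$ when $e/\Lambda<f(\phi_h)$; either is 0 only when its argument $2e/\Lambda$ or $e/\Lambda$ exceeds 1. Each condition added here is assumed in the paper as well or is needed for the statement above to hold. *)

From Stdlib Require Import Reals Lra ClassicalEpsilon.
From Coquelicot Require Import Coquelicot.
Open Scope R_scope.

Fixpoint prodden (x beta : R) (n : nat) : R :=
  match n with
  | O => 1
  | S k => prodden x beta k * (x + INR (S k) * beta)
  end.

(* Probability of no waiting driver:
   D = ( sum_{n>=0} e^n / prod_{a=1}^n (lambda f(phi) + a beta) )^{-1} *)
Definition Dprob (f : R -> R) (e lam phi beta : R) : R :=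
  / Series (fun n => e ^ n / prodden (lam * f phi) beta n).

Definition Bprob (f : R -> R) (e lam phi beta : R) : R :=
  Dprob f e lam phi beta * f phi + 1 - f phi.

Definition Mrev (f : R -> R) (e lam phi beta : R) : R :=
  lam * f phi * phi * (1 - Dprob f e lam phi beta).

Definition is_wardrop (f : R -> R) (e Lam phi1 phi2 beta lam1 : R) : Prop :=
  0 <= lam1 <= Lam /\
  forall lam, 0 <= lam <= Lam ->
    Rsqr (Bprob f e lam1 phi1 beta - Bprob f e (Lam - lam1) phi2 beta)
    <= Rsqr (Bprob f e lam phi1 beta - Bprob f e (Lam - lam) phi2 beta).

(* Inverse of f on [0, phih].  Out-of-range convention:
   y > f(0) = 1  ->  0 (as in the paper);
   y < f(phih)   ->  phih + 1 (the preimage lies beyond phih). *)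
Definition finv (f : R -> R) (phih y : R) : R :=
  if Rlt_dec 1 y then 0
  else if Rlt_dec y (f phih) then phih + 1
  else epsilon (inhabits 0) (fun p => 0 <= p <= phih /\ f p = y).

Definition phi_low (f : R -> R) (phih e Lam : R) : R := finv f phih (2 * e / Lam).
Definition phi_bar (f : R -> R) (phih e Lam : R) : R := finv f phih (e / Lam).

Definition mfun (f : R -> R) (e Lam phi : R) : R := (Lam * f phi - e) * phi.

(* The beta = 0 values (for phi1 >= phi2), cases (a)-(d). *)
Definition lam1_tilde (f : R -> R) (phih e Lam phi1 phi2 : R) : R :=
  if Rlt_dec phi1 (phi_low f phih e Lam) then Lam / 2                  (* (a) *)
  else if Req_dec_T phi1 phi2 then Lam / 2                              (* (d) *)
  else if Rlt_dec phi1 (phi_bar f phih e Lam) then Lam - e / f phi1     (* (b) *)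
  else 0.                                                               (* (c) *)

Definition M1_tilde (f : R -> R) (phih e Lam phi1 phi2 : R) : R :=
  if Rlt_dec phi1 (phi_low f phih e Lam) then e * phi1
  else if Req_dec_T phi1 phi2 then Lam / 2 * f phi1 * phi1
  else if Rlt_dec phi1 (phi_bar f phih e Lam) then mfun f e Lam phi1
  else 0.

Definition M2_tilde (f : R -> R) (phih e Lam phi1 phi2 : R) : R :=
  if Rlt_dec phi1 (phi_low f phih e Lam) then e * phi2
  else if Req_dec_T phi1 phi2 then Lam / 2 * f phi2 * phi2
  else if Rlt_dec phi1 (phi_bar f phih e Lam) then e * phi2
  else Rmin (Lam * f phi2) e * phi2.

Definition cont_on_nonneg (g : R -> R) : Prop :=
  forall b0, 0 <= b0 ->
    filterlim g (within (fun b => 0 <= b) (locally b0)) (locally (g b0)).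

From Stdlib Require Import Reals Lra Lia ClassicalEpsilon.
From Coquelicot Require Import Coquelicot.
Open Scope R_scope.

(* For fixed beta > 0 the waiting drivers of a platform form a birth-death chain, and [Dprob]
   is the probability that it is empty: the inverse of the series
   sum_n e^n / prod_{a <= n} (x + a beta), where x = lambda f(phi) is the effective passenger
   rate.  This probability increases with x and with beta; it is jointly continuous in (x, beta)
   for beta > 0 (dominated convergence against the exponential series), and as beta -> 0+ it
   converges, locally uniformly in x, to the fluid value max(0, 1 - e / x) (dominated
   convergence against the geometric series, then monotonicity in x).
   The blocking gap B_1(lambda) - B_2(Lambda - lambda) is strictly increasing in lambda, so the
   Wardrop split is the point where it changes sign.  At each fixed lambda the gap converges as
   beta -> b0, hence so does its sign-change point: to the split at b0 when b0 > 0, and to the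
   sign-change point of the fluid gap when b0 = 0, which is the value listed in cases (a)-(c).
   In case (d) the platforms are identical and the split is Lambda / 2 for every beta.  The
   revenues are continuous compositions of the split and of the empty-queue probability. *)

(** * Series and filters *)

Lemma ex_series_exp z : ex_series (fun n => / INR (Factorial.fact n) * z ^ n).
Proof. exists (exp z). apply is_pseries_R, is_exp_Reals. Qed.

Lemma ex_series_nonneg_le (a M : nat -> R) : (forall n, 0 <= a n <= M n) ->
  ex_series M -> ex_series a.
Proof.
  intros HaM HM; refine (@ex_series_le R_AbsRing R_CompleteNormedModule _ _ _ HM).
  intros n; change norm with Rabs; simpl; rewrite Rabs_pos_eq; apply HaM.
Qed.

Lemma Series_nonneg (a : nat -> R) : (forall n, 0 <= a n) -> ex_series a -> 0 <= Series a.
Proof.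
  intros Ha Hex.
  replace 0 with (Series (fun n => 0 * a n)) by (rewrite Series_scal_l; ring).
  apply Series_le; [intros n; rewrite Rmult_0_l; split; [lra | apply Ha] | exact Hex].
Qed.

Lemma Series_tail_le (a M : nat -> R) N : (forall n, 0 <= a n <= M n) -> ex_series M ->
  0 <= Series a - sum_f_R0 a N <= Series M - sum_f_R0 M N.
Proof.
  intros HaM HM; assert (Ha := ex_series_nonneg_le a M HaM HM).
  assert (Htail : forall c, ex_series c ->
    Series c - sum_f_R0 c N = Series (fun k => c (S N + k)%nat)).
  { intros c Hc; rewrite (Series_incr_n c (S N)) by (auto; lia); simpl; ring. }
  rewrite !Htail by assumption; split.
  - apply Series_nonneg; [intros; apply HaM | now apply ex_series_incr_n].
  - apply Series_le; [intros; apply HaM | now apply ex_series_incr_n].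
Qed.

Lemma Series_ge_partial (a : nat -> R) N : (forall n, 0 <= a n) -> ex_series a ->
  sum_f_R0 a N <= Series a.
Proof.
  intros Ha Hex.
  assert (H := Series_tail_le a a N (fun n => conj (Ha n) (Rle_refl _)) Hex); lra.
Qed.

Lemma within_right_proper (D : R -> Prop) x0 : (forall y, x0 < y -> D y) ->
  ProperFilter (within D (locally x0)).
Proof.
  intros HD; split; [|apply within_filter, locally_filter].
  intros P [eps HP]; assert (Heps := cond_pos eps).
  exists (x0 + eps / 2); apply HP; [|apply HD; lra].
  change (Rabs (x0 + eps / 2 - x0) < eps); rewrite Rabs_pos_eq; lra.
Qed.

Section FilterArith.

Context {T : Type} {F : (T -> Prop) -> Prop} {FF : Filter F}.

Lemma filterlim_Rplus (u v : T -> R) lu lv :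
  filterlim u F (locally lu) -> filterlim v F (locally lv) ->
  filterlim (fun p => u p + v p) F (locally (lu + lv)).
Proof.
  intros Hu Hv; exact (filterlim_comp_2 u v Rplus Hu Hv (@filterlim_plus _ R_NormedModule lu lv)).
Qed.

Lemma filterlim_Rminus (u v : T -> R) lu lv :
  filterlim u F (locally lu) -> filterlim v F (locally lv) ->
  filterlim (fun p => u p - v p) F (locally (lu - lv)).
Proof.
  intros Hu Hv; apply filterlim_Rplus; [exact Hu|].
  exact (filterlim_comp _ _ _ v Ropp F _ _ Hv (@filterlim_opp _ R_NormedModule lv)).
Qed.

Lemma filterlim_Rmult (u v : T -> R) lu lv :
  filterlim u F (locally lu) -> filterlim v F (locally lv) ->
  filterlim (fun p => u p * v p) F (locally (lu * lv)).
Proof.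
  intros Hu Hv; exact (filterlim_comp_2 u v Rmult Hu Hv (@filterlim_mult R_AbsRing lu lv)).
Qed.

Lemma filterlim_Rinv (u : T -> R) lu : lu <> 0 ->
  filterlim u F (locally lu) -> filterlim (fun p => / u p) F (locally (/ lu)).
Proof. intros Hl Hu; exact (filterlim_comp _ _ _ u Rinv F _ _ Hu (continuous_Rinv lu Hl)). Qed.

Lemma filterlim_eventually_lt (u : T -> R) l c :
  filterlim u F (locally l) -> l < c -> F (fun p => u p < c).
Proof.
  intros Hu Hlc; assert (Hpos : 0 < c - l) by lra.
  apply (proj1 (filterlim_locally u l)) with (eps := mkposreal _ Hpos) in Hu.
  revert Hu; apply filter_imp; intros p Hp.
  change (Rabs (u p - l) < c - l) in Hp; apply Rabs_def2 in Hp; lra.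
Qed.

Lemma filterlim_eventually_gt (u : T -> R) l c :
  filterlim u F (locally l) -> c < l -> F (fun p => c < u p).
Proof.
  intros Hu Hlc; assert (Hpos : 0 < l - c) by lra.
  apply (proj1 (filterlim_locally u l)) with (eps := mkposreal _ Hpos) in Hu.
  revert Hu; apply filter_imp; intros p Hp.
  change (Rabs (u p - l) < l - c) in Hp; apply Rabs_def2 in Hp; lra.
Qed.

Lemma filterlim_sum_f_R0 (a : T -> nat -> R) (a_lim : nat -> R) N :
  (forall n, filterlim (fun p => a p n) F (locally (a_lim n))) ->
  filterlim (fun p => sum_f_R0 (a p) N) F (locally (sum_f_R0 a_lim N)).
Proof.
  intros Ha; induction N as [|N IH]; [apply Ha | now apply filterlim_Rplus].
Qed.

End FilterArith.

Lemma filterlim_Series_dominated {T : Type} {F : (T -> Prop) -> Prop} {FF : ProperFilter F}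
  (a : T -> nat -> R) (a_lim M : nat -> R) :
  ex_series M -> F (fun p => forall n, 0 <= a p n <= M n) ->
  (forall n, filterlim (fun p => a p n) F (locally (a_lim n))) ->
  filterlim (fun p => Series (a p)) F (locally (Series a_lim)).
Proof.
  intros HM Hdom Ha; assert (FF' := Proper_StrongProper _ FF).
  assert (Hlim : forall n, 0 <= a_lim n <= M n).
  { intros n; split.
    - apply (filterlim_le (fun _ => 0) (fun p => a p n) 0 (a_lim n));
        [revert Hdom; apply filter_imp; intros p Hp; apply Hp | apply filterlim_const | apply Ha].
    - apply (filterlim_le (fun p => a p n) (fun _ => M n) (a_lim n) (M n));
        [revert Hdom; apply filter_imp; intros p Hp; apply Hp | apply Ha | apply filterlim_const]. }
  apply filterlim_locally; intros eps.
  assert (Heps : 0 < eps / 3) by (assert (H := cond_pos eps); lra).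
  destruct (proj1 (is_series_Reals M (Series M)) (Series_correct _ HM) _ Heps) as [N HN].
  specialize (HN N (le_n N)); unfold R_dist in HN.
  assert (Hpart := proj1 (filterlim_locally _ _) (filterlim_sum_f_R0 a a_lim N Ha)
    (mkposreal _ Heps)).
  generalize (filter_and _ _ Hdom Hpart); apply filter_imp; intros p [Hp Hps].
  change (Rabs (sum_f_R0 (a p) N - sum_f_R0 a_lim N) < eps / 3) in Hps.
  change (Rabs (Series (a p) - Series a_lim) < eps).
  assert (Tp := Series_tail_le (a p) M N Hp HM).
  assert (Tl := Series_tail_le a_lim M N Hlim HM).
  apply Rabs_def2 in Hps; apply Rabs_def2 in HN; apply Rabs_def1; lra.
Qed.

(** * The driver queue *)

Lemma prodden_0_l b n : prodden 0 b n = INR (Factorial.fact n) * b ^ n.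
Proof.
  induction n as [|n IH]; cbn [prodden pow]; [simpl; ring|].
  rewrite IH, fact_simpl, mult_INR; ring.
Qed.

Lemma prodden_0_r x n : prodden x 0 n = x ^ n.
Proof. induction n as [|n IH]; cbn [prodden pow]; [|rewrite IH]; ring. Qed.

Lemma prodden_ge0 x b n : 0 <= x -> 0 <= b -> 0 <= prodden x b n.
Proof.
  intros Hx Hb; induction n as [|n IH]; cbn [prodden]; [lra|].
  assert (0 <= INR (S n)) by apply pos_INR.
  apply Rmult_le_pos; nra.
Qed.

Lemma prodden_pos x b n : 0 <= x -> 0 <= b -> 0 < x + b -> 0 < prodden x b n.
Proof.
  intros Hx Hb Hxb; induction n as [|n IH]; cbn [prodden]; [lra|].
  assert (1 <= INR (S n)) by (apply (le_INR 1); lia).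
  apply Rmult_lt_0_compat; nra.
Qed.

Lemma prodden_le x b x' b' n : 0 <= x <= x' -> 0 <= b <= b' ->
  prodden x b n <= prodden x' b' n.
Proof.
  intros Hx Hb; induction n as [|n IH]; cbn [prodden]; [lra|].
  assert (0 <= INR (S n)) by apply pos_INR.
  apply Rmult_le_compat; try apply prodden_ge0; nra.
Qed.

(* [Dprob f e lam phi beta] is [empty_prob e (lam * f phi) beta] by definition. *)
Definition queue_weight (e x b : R) (n : nat) : R := e ^ n / prodden x b n.

Definition queue_mass (e x b : R) : R := Series (queue_weight e x b).

Definition empty_prob (e x b : R) : R := / queue_mass e x b.

Lemma queue_weight_pos e x b n : 0 < e -> 0 <= x -> 0 <= b -> 0 < x + b ->
  0 < queue_weight e x b n.
Proof.
  intros; apply Rdiv_lt_0_compat; [apply pow_lt; lra | now apply prodden_pos].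
Qed.

Lemma queue_weight_antitone e x b x' b' n : 0 < e -> 0 <= x <= x' -> 0 <= b <= b' ->
  0 < x + b -> queue_weight e x' b' n <= queue_weight e x b n.
Proof.
  intros; apply Rmult_le_compat_l; [apply pow_le; lra|].
  apply Rinv_le_contravar; [now apply prodden_pos | now apply prodden_le].
Qed.

Lemma queue_weight_le_exp e x b c n : 0 < e -> 0 <= x -> 0 < c <= b ->
  queue_weight e x b n <= / INR (Factorial.fact n) * (e / c) ^ n.
Proof.
  intros He Hx Hc; assert (Hf : 0 < INR (Factorial.fact n)) by apply INR_fact_lt_0.
  eapply Rle_trans; [apply (queue_weight_antitone e 0 c); lra|].
  unfold queue_weight, Rdiv; rewrite prodden_0_l, Rpow_mult_distr, pow_inv.
  right; field; split; [apply pow_nonzero|]; lra.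
Qed.

Lemma ex_series_queue_weight e x b : 0 < e -> 0 <= x -> 0 < b ->
  ex_series (queue_weight e x b).
Proof.
  intros He Hx Hb; refine (ex_series_nonneg_le _ _ _ (ex_series_exp (e / b))).
  intros n; split; [left; apply queue_weight_pos | apply queue_weight_le_exp]; lra.
Qed.

Section QueueMass.

Variable e : R.
Hypothesis He : 0 < e.

Lemma queue_mass_ge1 x b : 0 <= x -> 0 < b -> 1 <= queue_mass e x b.
Proof.
  intros Hx Hb.
  assert (Hw : forall n, 0 <= queue_weight e x b n)
    by (intros; left; apply queue_weight_pos; lra).
  assert (H := Series_ge_partial _ 0 Hw (ex_series_queue_weight e x b He Hx Hb)).
  unfold queue_weight at 1 in H; simpl in H; unfold queue_mass; lra.
Qed.

Lemma queue_mass_antitone x b x' b' : 0 <= x <= x' -> 0 < b <= b' ->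
  queue_mass e x' b' <= queue_mass e x b.
Proof.
  intros Hx Hb; apply Series_le; [|apply ex_series_queue_weight; lra].
  intros n; split; [left; apply queue_weight_pos | apply queue_weight_antitone]; lra.
Qed.

Lemma queue_mass_lt x x' b : 0 <= x < x' -> 0 < b -> queue_mass e x' b < queue_mass e x b.
Proof.
  intros Hx Hb.
  set (d n := queue_weight e x b n - queue_weight e x' b n).
  assert (Hd : forall n, 0 <= d n <= queue_weight e x b n).
  { intros n; unfold d.
    assert (0 < queue_weight e x' b n) by (apply queue_weight_pos; lra).
    assert (queue_weight e x' b n <= queue_weight e x b n)
      by (apply queue_weight_antitone; lra).
    lra. }
  assert (Hex : ex_series d)
    by (apply (ex_series_nonneg_le _ _ Hd), ex_series_queue_weight; lra).
  assert (Hsum : sum_f_R0 d 1 <= Series d) by (apply Series_ge_partial; auto; apply Hd).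
  assert (Hd1 : 0 < d 1%nat).
  { unfold d, queue_weight; simpl; apply Rlt_0_minus.
    apply Rmult_lt_compat_l; [lra | apply Rinv_lt_contravar; nra]. }
  assert (Hdiff : Series d = queue_mass e x b - queue_mass e x' b)
    by (apply Series_minus; apply ex_series_queue_weight; lra).
  simpl in Hsum; assert (Hd0 := proj1 (Hd 0%nat)); lra.
Qed.

Lemma empty_prob_bounds x b : 0 <= x -> 0 < b -> 0 < empty_prob e x b <= 1.
Proof.
  intros Hx Hb; assert (H := queue_mass_ge1 x b Hx Hb); unfold empty_prob; split.
  - apply Rinv_0_lt_compat; lra.
  - rewrite <- Rinv_1; apply Rinv_le_contravar; lra.
Qed.

Lemma empty_prob_monotone x b x' b' : 0 <= x <= x' -> 0 < b <= b' ->
  empty_prob e x b <= empty_prob e x' b'.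
Proof.
  intros Hx Hb; apply Rinv_le_contravar.
  - assert (1 <= queue_mass e x' b') by (apply queue_mass_ge1; lra); lra.
  - now apply queue_mass_antitone.
Qed.

Lemma empty_prob_lt x x' b : 0 <= x < x' -> 0 < b -> empty_prob e x b < empty_prob e x' b.
Proof.
  intros Hx Hb; apply Rinv_lt_contravar.
  - assert (1 <= queue_mass e x' b) by (apply queue_mass_ge1; lra).
    assert (1 <= queue_mass e x b) by (apply queue_mass_ge1; lra); nra.
  - now apply queue_mass_lt.
Qed.

End QueueMass.

(** * Limits of the empty-queue probability *)

Lemma filterlim_prodden {T : Type} {F : (T -> Prop) -> Prop} {FF : Filter F}
  (X Y : T -> R) x0 b0 n :
  filterlim X F (locally x0) -> filterlim Y F (locally b0) ->
  filterlim (fun p => prodden (X p) (Y p) n) F (locally (prodden x0 b0 n)).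
Proof.
  intros HX HY; induction n as [|n IH]; [apply filterlim_const|].
  apply filterlim_Rmult; [exact IH|].
  apply filterlim_Rplus; [exact HX | apply filterlim_Rmult; [apply filterlim_const | exact HY]].
Qed.

Lemma filterlim_queue_weight {T : Type} {F : (T -> Prop) -> Prop} {FF : Filter F}
  e (X Y : T -> R) x0 b0 n : prodden x0 b0 n <> 0 ->
  filterlim X F (locally x0) -> filterlim Y F (locally b0) ->
  filterlim (fun p => queue_weight e (X p) (Y p) n) F (locally (queue_weight e x0 b0 n)).
Proof.
  intros Hp HX HY; apply filterlim_Rmult; [apply filterlim_const|].
  now apply filterlim_Rinv, filterlim_prodden.
Qed.

Definition locally_pos (b0 : R) : (R -> Prop) -> Prop := within (fun b => 0 < b) (locally b0).


Lemma locally_pos_proper b0 : 0 <= b0 -> ProperFilter (locally_pos b0).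
Proof. intros; apply within_right_proper; intros; lra. Qed.

Lemma locally_pos_forall b0 (P : R -> Prop) : (forall b, 0 < b -> P b) -> locally_pos b0 P.
Proof. exact (filter_forall (F := locally b0) _). Qed.

Definition empty_prob_lim (e b0 : R) (DL : R -> R) : Prop :=
  forall x0, 0 <= x0 ->
  filterlim (fun p : R * R => empty_prob e (fst p) (snd p))
    (filter_prod (within (fun x => 0 <= x) (locally x0)) (locally_pos b0)) (locally (DL x0)).

Lemma empty_prob_lim_pos e b0 : 0 < e -> 0 < b0 ->
  empty_prob_lim e b0 (fun x => empty_prob e x b0).
Proof.
  intros He Hb0 x0 Hx0.
  assert (FF : ProperFilter (filter_prod (within (fun x => 0 <= x) (locally x0)) (locally_pos b0)))
    by (apply @filter_prod_proper; apply within_right_proper; intros; lra).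
  apply filterlim_Rinv; [assert (H := queue_mass_ge1 e He x0 b0 Hx0 Hb0); lra|].
  apply (filterlim_Series_dominated (FF := FF) _ _
    (fun n => / INR (Factorial.fact n) * (e / (b0 / 2)) ^ n)); [apply ex_series_exp| |].
  - apply (Filter_prod _ _ _ (fun x => 0 <= x) (fun b => b0 / 2 <= b)).
    + exact (filter_forall (F := locally x0) _ (fun x Hx => Hx)).
    + exists (mkposreal (b0 / 2) ltac:(lra)); intros b Hb _.
      change (Rabs (b - b0) < b0 / 2) in Hb; apply Rabs_def2 in Hb; lra.
    + intros x b Hx Hb n; simpl.
      split; [left; apply queue_weight_pos | apply queue_weight_le_exp]; lra.
  - intros n; apply filterlim_queue_weight.
    + apply Rgt_not_eq, prodden_pos; lra.
    + exact (filterlim_filter_le_2 _ (filter_le_within _) filterlim_fst).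
    + exact (filterlim_filter_le_2 _ (filter_le_within _) filterlim_snd).
Qed.

Definition fluid_empty_prob (e x : R) : R := if Rle_dec x e then 0 else 1 - e / x.

Lemma empty_prob_fluid_limit_gt e x : 0 < e < x ->
  filterlim (fun b => empty_prob e x b) (locally_pos 0) (locally (1 - e / x)).
Proof.
  intros Hex.
  assert (Hq : 0 <= e / x < 1).
  { split; [apply Rlt_le, Rdiv_lt_0_compat; lra|].
    apply Rmult_lt_reg_r with x; [lra|]; unfold Rdiv; rewrite Rmult_assoc, Rinv_l; lra. }
  replace (1 - e / x) with (/ Series (fun n => (e / x) ^ n))
    by (rewrite Series_geom by (rewrite Rabs_pos_eq; lra); rewrite Rinv_inv; reflexivity).
  apply filterlim_Rinv; [rewrite Series_geom by (rewrite Rabs_pos_eq; lra);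
    apply Rinv_neq_0_compat; lra|].
  assert (Hgeom : forall n, (e / x) ^ n = queue_weight e x 0 n).
  { intros n; unfold queue_weight, Rdiv.
    rewrite prodden_0_r, Rpow_mult_distr, pow_inv; reflexivity. }
  apply (filterlim_Series_dominated (FF := locally_pos_proper 0 (Rle_refl 0))
    _ _ (fun n => (e / x) ^ n)); [apply ex_series_geom; rewrite Rabs_pos_eq; lra| |].
  - apply locally_pos_forall; intros b Hb n; rewrite Hgeom.
    split; [left; apply queue_weight_pos | apply queue_weight_antitone]; lra.
  - intros n; rewrite Hgeom; apply filterlim_queue_weight.
    + rewrite prodden_0_r; apply pow_nonzero; lra.
    + apply filterlim_const.
    + exact (filterlim_filter_le_2 _ (filter_le_within _) (filterlim_id _ _)).
Qed.

Lemma empty_prob_fluid_limit e x : 0 < e -> 0 <= x ->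
  filterlim (fun b => empty_prob e x b) (locally_pos 0) (locally (fluid_empty_prob e x)).
Proof.
  intros He Hx; unfold fluid_empty_prob; destruct (Rle_dec x e) as [Hxe|Hxe];
    [|apply empty_prob_fluid_limit_gt; lra].
  apply filterlim_locally; intros eps; assert (Heps := cond_pos eps).
  (* Squeeze between 0 and the value at y = e (1 + eps) > e, whose limit is eps / (1 + eps). *)
  set (y := e * (1 + eps)); assert (Hey : e < y) by (unfold y; nra).
  assert (Hy : 1 - e / y < eps)
    by (unfold y; replace (1 - e / (e * (1 + eps))) with (eps / (1 + eps)) by (field; lra);
        apply Rmult_lt_reg_r with (1 + eps); [lra|];
        unfold Rdiv; rewrite Rmult_assoc, Rinv_l; nra).
  assert (Hey' : 0 < e < y) by lra.
  assert (Hlim := filterlim_eventually_lt _ _ _ (empty_prob_fluid_limit_gt e y Hey') Hy).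
  generalize (filter_and _ _ Hlim (locally_pos_forall 0 _ (fun b Hb => Hb))).
  apply filter_imp; intros b [Hyb Hb].
  assert (0 < empty_prob e x b <= empty_prob e y b).
  { split; [apply empty_prob_bounds | apply empty_prob_monotone]; lra. }
  change (Rabs (empty_prob e x b - 0) < eps); rewrite Rminus_0_r, Rabs_pos_eq; lra.
Qed.

Lemma fluid_empty_prob_lipschitz e x y : 0 < e -> 0 <= x <= y ->
  0 <= fluid_empty_prob e y - fluid_empty_prob e x <= (y - x) / e.
Proof.
  intros He Hxy; unfold fluid_empty_prob.
  assert (Hq : 0 <= (y - x) / e) by (apply Rdiv_le_0_compat; lra).
  destruct (Rle_dec x e); destruct (Rle_dec y e); try lra.
  - replace (1 - e / y - 0) with ((y - e) / y) by (field; lra).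
    split; [apply Rdiv_le_0_compat; lra|].
    apply Rle_trans with ((y - e) / e);
      [apply Rmult_le_compat_l; [lra | apply Rinv_le_contravar; lra]
      | apply Rmult_le_compat_r; [apply Rlt_le, Rinv_0_lt_compat|]; lra].
  - replace (1 - e / y - (1 - e / x)) with ((y - x) / e * (e * e / (x * y))) by (field; lra).
    assert (0 < e * e / (x * y) <= 1).
    { split; [apply Rdiv_lt_0_compat; nra|].
      apply Rmult_le_reg_r with (x * y); [nra|].
      unfold Rdiv; rewrite Rmult_assoc, Rinv_l; nra. }
    split; nra.
Qed.

Lemma empty_prob_lim_zero e : 0 < e -> empty_prob_lim e 0 (fluid_empty_prob e).
Proof.
  intros He x0 Hx0; apply filterlim_locally; intros eps; assert (Heps := cond_pos eps).
  set (d := e * eps / 2); assert (Hd : 0 < d) by (unfold d; nra).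
  set (xl := Rmax 0 (x0 - d)); set (xu := x0 + d).
  assert (Hxl : 0 <= xl <= x0 /\ x0 - d <= xl)
    by (unfold xl; split; [split; [apply Rmax_l | apply Rmax_lub]|apply Rmax_r]; lra).
  assert (Hdl := fluid_empty_prob_lipschitz e xl x0 He ltac:(lra)).
  assert (Hdu := fluid_empty_prob_lipschitz e x0 xu He ltac:(unfold xu; lra)).
  assert (Hde : d / e = eps / 2) by (unfold d; field; lra).
  assert ((x0 - xl) / e <= d / e)
    by (apply Rmult_le_compat_r; [apply Rlt_le, Rinv_0_lt_compat|]; lra).
  replace ((xu - x0) / e) with (d / e) in Hdu by (unfold xu; field; lra).
  (* Squeeze between the pointwise limits at xl and xu, both within eps / 2 of the target. *)
  apply (Filter_prod _ _ _ (fun x => 0 <= x /\ Rabs (x - x0) < d)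
    (fun b => 0 < b /\ fluid_empty_prob e xl - eps / 2 < empty_prob e xl b
              /\ empty_prob e xu b < fluid_empty_prob e xu + eps / 2)).
  - apply (filter_imp (F := locally x0) (ball x0 (mkposreal d Hd))); [|apply locally_ball].
    intros x Hx Hx0'; split; [exact Hx0' | exact Hx].
  - repeat apply filter_and.
    + now apply locally_pos_forall.
    + apply filterlim_eventually_gt with (fluid_empty_prob e xl); [|lra].
      apply empty_prob_fluid_limit; lra.
    + apply filterlim_eventually_lt with (fluid_empty_prob e xu); [|lra].
      apply empty_prob_fluid_limit; unfold xu; lra.
  - intros x b [Hx Hxd] [Hb [Hlo Hhi]]; apply Rabs_def2 in Hxd.
    assert (empty_prob e xl b <= empty_prob e x b <= empty_prob e xu b).
    { split; apply empty_prob_monotone; unfold xu; try lra.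
      split; [lra|]; apply Rmax_lub; lra. }
    change (Rabs (empty_prob e x b - fluid_empty_prob e x0) < eps); apply Rabs_def1; lra.
Qed.

Lemma filterlim_empty_prob_comp e b0 DL (X : R -> R) x0 :
  empty_prob_lim e b0 DL -> 0 <= x0 -> filterlim X (locally_pos b0) (locally x0) ->
  (forall b, 0 < b -> 0 <= X b) ->
  filterlim (fun b => empty_prob e (X b) b) (locally_pos b0) (locally (DL x0)).
Proof.
  intros HD Hx0 HX HXpos.
  apply (filterlim_comp_2 (G := within (fun x => 0 <= x) (locally x0)) (H := locally_pos b0)
    X (fun b => b) (empty_prob e)); [|apply filterlim_id | now apply HD].
  unfold filterlim, filter_le, filtermap in HX |- *; intros P HP.
  generalize (filter_and _ _ (HX _ HP) (locally_pos_forall b0 _ HXpos)).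
  apply filter_imp; intros b [H1 H2]; exact (H1 H2).
Qed.

(** * Wardrop splits *)

(* [Bprob f e lam phi beta] is [blocking (fun x => empty_prob e x beta) (f phi) lam]. *)
Definition blocking (D : R -> R) (fp lam : R) : R := D (lam * fp) * fp + 1 - fp.

Definition blocking_gap (D : R -> R) (f1 f2 Lam lam : R) : R :=
  blocking D f1 lam - blocking D f2 (Lam - lam).

Lemma blocking_gap_lt e f1 f2 Lam b a c : 0 < e -> 0 < f1 -> 0 < f2 -> 0 < b ->
  0 <= a < c -> c <= Lam ->
  blocking_gap (fun x => empty_prob e x b) f1 f2 Lam a
  < blocking_gap (fun x => empty_prob e x b) f1 f2 Lam c.
Proof.
  intros He Hf1 Hf2 Hb Hac HcL; unfold blocking_gap, blocking.
  assert (empty_prob e (a * f1) b < empty_prob e (c * f1) b) by (apply empty_prob_lt; nra).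
  assert (empty_prob e ((Lam - c) * f2) b < empty_prob e ((Lam - a) * f2) b)
    by (apply empty_prob_lt; nra).
  nra.
Qed.

Lemma filterlim_blocking_gap e b0 DL f1 f2 Lam lam :
  empty_prob_lim e b0 DL -> 0 <= f1 -> 0 <= f2 -> 0 <= lam <= Lam ->
  filterlim (fun b => blocking_gap (fun x => empty_prob e x b) f1 f2 Lam lam)
    (locally_pos b0) (locally (blocking_gap DL f1 f2 Lam lam)).
Proof.
  intros HD Hf1 Hf2 Hlam.
  assert (Hblock : forall fp l, 0 <= fp -> 0 <= l ->
    filterlim (fun b => blocking (fun x => empty_prob e x b) fp l) (locally_pos b0)
      (locally (blocking DL fp l))).
  { intros fp l Hfp Hl; unfold blocking.
    apply filterlim_Rminus; [apply filterlim_Rplus|]; try apply filterlim_const.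
    apply filterlim_Rmult; [|apply filterlim_const].
    apply (filterlim_empty_prob_comp e b0 DL (fun _ => l * fp));
      [exact HD | nra | apply filterlim_const | intros; nra]. }
  unfold blocking_gap; apply filterlim_Rminus; apply Hblock; lra.
Qed.

Definition sign_change_at (g : R -> R) (Lam w : R) : Prop :=
  0 <= w <= Lam /\ (forall a, 0 <= a < w -> g a < 0) /\ (forall c, w < c <= Lam -> 0 < g c).

Lemma sign_change_at_unique g Lam w w' :
  sign_change_at g Lam w -> sign_change_at g Lam w' -> w = w'.
Proof.
  intros [Hw [Hlo Hhi]] [Hw' [Hlo' Hhi']].
  destruct (Rtotal_order w w') as [Hlt|[Heq|Hlt]]; [|exact Heq|].
  - assert (H1 := Hhi ((w + w') / 2) ltac:(lra)).
    assert (H2 := Hlo' ((w + w') / 2) ltac:(lra)); lra.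
  - assert (H1 := Hhi' ((w + w') / 2) ltac:(lra)).
    assert (H2 := Hlo ((w + w') / 2) ltac:(lra)); lra.
Qed.

Lemma sign_change_at_of_sqr_min (g : R -> R) Lam w :
  (forall x y, 0 <= x < y -> y <= Lam -> g x < g y) -> 0 <= w <= Lam ->
  (forall lam, 0 <= lam <= Lam -> Rsqr (g w) <= Rsqr (g lam)) -> sign_change_at g Lam w.
Proof.
  intros Hg Hw Hmin; split; [exact Hw|split].
  - intros a Ha; assert (g a < g w) by (apply Hg; lra).
    assert (Ha_min := Hmin a ltac:(lra)); unfold Rsqr in Ha_min.
    destruct (Rlt_dec (g a) 0); [assumption|nra].
  - intros c Hc; assert (g w < g c) by (apply Hg; lra).
    assert (Hc_min := Hmin c ltac:(lra)); unfold Rsqr in Hc_min.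
    destruct (Rlt_dec 0 (g c)); [assumption|nra].
Qed.

Lemma sign_change_at_wardrop f e Lam phi1 phi2 b lam1 :
  0 < e -> 0 < f phi1 -> 0 < f phi2 -> 0 < b -> is_wardrop f e Lam phi1 phi2 b lam1 ->
  sign_change_at (blocking_gap (fun x => empty_prob e x b) (f phi1) (f phi2) Lam) Lam lam1.
Proof.
  intros He Hf1 Hf2 Hb [Hlam Hmin]; apply sign_change_at_of_sqr_min; [|exact Hlam|exact Hmin].
  intros; apply blocking_gap_lt; lra.
Qed.

Lemma filterlim_sign_change_point {T : Type} {F : (T -> Prop) -> Prop} {FF : Filter F}
  (G : T -> R -> R) (W : T -> R) Lam Wl :
  0 <= Wl <= Lam -> F (fun p => sign_change_at (G p) Lam (W p)) ->
  (forall a, 0 <= a < Wl -> F (fun p => G p a < 0)) ->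
  (forall c, Wl < c <= Lam -> F (fun p => 0 < G p c)) ->
  filterlim W F (locally Wl).
Proof.
  intros HWl HW Hneg Hpos; apply filterlim_locally; intros eps; assert (Heps := cond_pos eps).
  assert (Hlo : F (fun p => Wl - eps < W p)).
  { destruct (Rle_dec 0 (Wl - eps / 2)).
    - generalize (filter_and _ _ HW (Hneg (Wl - eps / 2) ltac:(lra))).
      apply filter_imp; intros p [[HWp [_ HWpos]] Hp].
      destruct (Rlt_dec (W p) (Wl - eps / 2)) as [Hlt|]; [|lra].
      assert (Hc : W p < Wl - eps / 2 <= Lam) by lra.
      assert (H := HWpos _ Hc); lra.
    - revert HW; apply filter_imp; intros p [HWp _]; lra. }
  assert (Hhi : F (fun p => W p < Wl + eps)).
  { destruct (Rle_dec (Wl + eps / 2) Lam).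
    - generalize (filter_and _ _ HW (Hpos (Wl + eps / 2) ltac:(lra))).
      apply filter_imp; intros p [[HWp [HWneg _]] Hp].
      destruct (Rlt_dec (Wl + eps / 2) (W p)) as [Hlt|]; [|lra].
      assert (Ha : 0 <= Wl + eps / 2 < W p) by lra.
      assert (H := HWneg _ Ha); lra.
    - revert HW; apply filter_imp; intros p [HWp _]; lra. }
  generalize (filter_and _ _ Hlo Hhi); apply filter_imp; intros p Hp.
  change (Rabs (W p - Wl) < eps); apply Rabs_def1; lra.
Qed.

Lemma filterlim_wardrop_split e f1 f2 Lam b0 DL (W : R -> R) Wl :
  0 < e -> 0 <= f1 -> 0 <= f2 ->
  (forall b, 0 < b ->
     sign_change_at (blocking_gap (fun x => empty_prob e x b) f1 f2 Lam) Lam (W b)) ->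
  empty_prob_lim e b0 DL -> sign_change_at (blocking_gap DL f1 f2 Lam) Lam Wl ->
  filterlim W (locally_pos b0) (locally Wl).
Proof.
  intros He Hf1 Hf2 HW HD [HWl [Hneg Hpos]].
  apply (filterlim_sign_change_point
    (fun b => blocking_gap (fun x => empty_prob e x b) f1 f2 Lam) W Lam Wl HWl).
  - exact (locally_pos_forall b0 _ HW).
  - intros a Ha; apply filterlim_eventually_lt with (blocking_gap DL f1 f2 Lam a);
      [apply filterlim_blocking_gap; auto; lra | now apply Hneg].
  - intros c Hc; apply filterlim_eventually_gt with (blocking_gap DL f1 f2 Lam c);
      [apply filterlim_blocking_gap; auto; lra | now apply Hpos].
Qed.

Lemma filterlim_Mrev f e b0 DL (L : R -> R) Ll phi :
  empty_prob_lim e b0 DL -> 0 <= f phi -> 0 <= Ll ->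
  filterlim L (locally_pos b0) (locally Ll) -> (forall b, 0 < b -> 0 <= L b) ->
  filterlim (fun b => Mrev f e (L b) phi b) (locally_pos b0)
    (locally (Ll * f phi * phi * (1 - DL (Ll * f phi)))).
Proof.
  intros HD Hf HLl HL HLpos.
  assert (HX : filterlim (fun b => L b * f phi) (locally_pos b0) (locally (Ll * f phi)))
    by (apply filterlim_Rmult; [exact HL | apply filterlim_const]).
  unfold Mrev; apply filterlim_Rmult; [apply filterlim_Rmult; [exact HX | apply filterlim_const]|].
  apply filterlim_Rminus; [apply filterlim_const|].
  apply (filterlim_empty_prob_comp e b0 DL _ _ HD); [nra | exact HX |].
  intros b Hb; apply Rmult_le_pos; auto.
Qed.

Lemma cont_on_nonneg_of_locally_pos (g : R -> R) :
  (forall b0, 0 <= b0 -> filterlim g (locally_pos b0) (locally (g b0))) -> cont_on_nonneg g.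
Proof.
  intros H b0 Hb0 P HP; specialize (H b0 Hb0 P HP).
  unfold filtermap, locally_pos, within in H |- *.
  destruct Hb0 as [Hpos|<-].
  - generalize (filter_and _ _ H (locally_ball b0 (mkposreal b0 Hpos))).
    apply filter_imp; intros b [Hb Hball] _; apply Hb.
    change (Rabs (b - b0) < b0) in Hball; apply Rabs_def2 in Hball; lra.
  - revert H; apply filter_imp; intros b Hb [Hb0|<-];
      [now apply Hb | now apply locally_singleton].
Qed.

Lemma cont_on_nonneg_Mrev f e phi (L : R -> R) M0 : 0 <= f phi ->
  (forall b, 0 < b -> 0 <= L b) ->
  (forall b0, 0 <= b0 -> exists DL, empty_prob_lim e b0 DL /\ 0 <= L b0 /\
     filterlim L (locally_pos b0) (locally (L b0)) /\
     (if Req_dec_T b0 0 then M0 else Mrev f e (L b0) phi b0)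
       = L b0 * f phi * phi * (1 - DL (L b0 * f phi))) ->
  cont_on_nonneg (fun beta => if Req_dec_T beta 0 then M0 else Mrev f e (L beta) phi beta).
Proof.
  intros Hf HLpos Hlim; apply cont_on_nonneg_of_locally_pos; intros b0 Hb0.
  destruct (Hlim b0 Hb0) as [DL [HD [HLb0 [HL ->]]]].
  apply (filterlim_ext_loc (fun b => Mrev f e (L b) phi b)).
  - apply locally_pos_forall; intros b Hb; destruct (Req_dec_T b 0); [lra | reflexivity].
  - now apply filterlim_Mrev.
Qed.

(** * The fluid regime beta = 0 *)

Lemma fluid_revenue e L fp phi : 0 < e -> 0 <= L * fp ->
  L * fp * phi * (1 - fluid_empty_prob e (L * fp)) = Rmin (L * fp) e * phi.
Proof.
  intros He HL; set (x := L * fp) in *; unfold fluid_empty_prob, Rmin.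
  destruct (Rle_dec x e); [ring | field; lra].
Qed.

Definition fluid_success (e fp lam : R) : R := 1 - blocking (fluid_empty_prob e) fp lam.

Lemma blocking_gap_fluid e f1 f2 Lam lam : blocking_gap (fluid_empty_prob e) f1 f2 Lam lam
  = fluid_success e f2 (Lam - lam) - fluid_success e f1 lam.
Proof. unfold blocking_gap, fluid_success; ring. Qed.

(* [fluid_success e fp lam] is min(fp, e / lam): a passenger accepts with probability fp,
   unless the lam accepting passengers exhaust the driver supply e. *)
Lemma fluid_success_spec e fp lam : 0 < e -> 0 < fp -> 0 <= lam ->
  0 < fluid_success e fp lam <= fp /\ lam * fluid_success e fp lam <= e /\
  (fluid_success e fp lam = fp \/ lam * fluid_success e fp lam = e).
Proof.
  intros He Hfp Hlam; unfold fluid_success, blocking, fluid_empty_prob.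
  destruct (Rle_dec (lam * fp) e) as [Hle|Hgt].
  - replace (1 - (0 * fp + 1 - fp)) with fp by ring; lra.
  - assert (Hlam' : 0 < lam) by (destruct Hlam as [|<-]; [assumption | lra]).
    replace (1 - ((1 - e / (lam * fp)) * fp + 1 - fp)) with (e / lam) by (field; lra).
    assert (E : lam * (e / lam) = e) by (field; lra).
    assert (e / lam < fp) by (apply Rmult_lt_reg_l with lam; [lra | rewrite E; lra]).
    assert (0 < e / lam) by (apply Rdiv_lt_0_compat; lra).
    lra.
Qed.

Section FluidSignChange.

Variables e f1 f2 Lam : R.
Hypotheses (He : 0 < e) (HLam : 0 < Lam) (Hf1 : 0 < f1).

Lemma fluid_sign_change_high_demand : f1 <= f2 -> 2 * e < Lam * f1 ->
  sign_change_at (blocking_gap (fluid_empty_prob e) f1 f2 Lam) Lam (Lam / 2).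
Proof.
  intros Hf12 Hd; split; [lra|split]; intros l Hl; rewrite blocking_gap_fluid;
    destruct (fluid_success_spec e f1 l He Hf1 ltac:(lra)) as [A1 [A2 A3]];
    destruct (fluid_success_spec e f2 (Lam - l) He ltac:(lra) ltac:(lra)) as [B1 [B2 B3]];
    set (s1 := fluid_success e f1 l) in *; set (s2 := fluid_success e f2 (Lam - l)) in *.
  - assert (s2 * Lam < 2 * e) by nra; assert (s2 < f1) by nra.
    destruct A3 as [A3|A3]; nra.
  - assert (s1 * Lam < 2 * e) by nra; assert (s1 < f1) by nra.
    destruct B3 as [B3|B3]; nra.
Qed.

Lemma fluid_sign_change_mid_demand : f1 < f2 -> e < Lam * f1 <= 2 * e ->
  sign_change_at (blocking_gap (fluid_empty_prob e) f1 f2 Lam) Lam (Lam - e / f1).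
Proof.
  intros Hf12 Hd.
  assert (E : (Lam - e / f1) * f1 = Lam * f1 - e) by (field; lra).
  assert (0 < e / f1) by (apply Rdiv_lt_0_compat; lra).
  assert (Hw : 0 <= Lam - e / f1 <= Lam) by (split; nra).
  split; [exact Hw|split]; intros l Hl; rewrite blocking_gap_fluid;
    destruct (fluid_success_spec e f1 l He Hf1 ltac:(lra)) as [A1 [A2 A3]];
    destruct (fluid_success_spec e f2 (Lam - l) He ltac:(lra) ltac:(lra)) as [B1 [B2 B3]];
    set (s1 := fluid_success e f1 l) in *; set (s2 := fluid_success e f2 (Lam - l)) in *.
  - assert (l * f1 < Lam * f1 - e) by nra.
    assert (s1 = f1) by (destruct A3 as [A3|A3]; [exact A3 | nra]).
    nra.
  - assert (Lam * f1 - e < l * f1) by nra.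
    destruct B3 as [B3|B3]; nra.
Qed.

Lemma fluid_sign_change_low_demand : f1 < f2 -> Lam * f1 <= e ->
  sign_change_at (blocking_gap (fluid_empty_prob e) f1 f2 Lam) Lam 0.
Proof.
  intros Hf12 Hd; split; [lra|split]; [intros; lra|]; intros l Hl; rewrite blocking_gap_fluid;
    destruct (fluid_success_spec e f1 l He Hf1 ltac:(lra)) as [A1 [A2 A3]];
    destruct (fluid_success_spec e f2 (Lam - l) He ltac:(lra) ltac:(lra)) as [B1 [B2 B3]];
    set (s1 := fluid_success e f1 l) in *; set (s2 := fluid_success e f2 (Lam - l)) in *.
  destruct B3 as [B3|B3]; nra.
Qed.

End FluidSignChange.

Section WardropContinuity.

Variables (f : R -> R) (phih Lam e phi1 phi2 : R) (W : R -> R).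
Hypotheses (Hphih : 0 < phih) (HLam : 0 < Lam) (He : 0 < e) (Hf0 : f 0 = 1)
  (Hfpos : forall p, 0 <= p <= phih -> 0 < f p <= 1)
  (Hfdec : forall x y, 0 <= x <= phih -> 0 <= y <= phih -> x < y -> f y < f x)
  (Hfcont : forall p, 0 <= p <= phih -> continuity_pt f p)
  (Hphi1 : 0 <= phi1 <= phih) (Hphi2 : 0 <= phi2 <= phih) (H12 : phi2 <= phi1)
  (HWs : forall b, 0 < b ->
     sign_change_at (blocking_gap (fun x => empty_prob e x b) (f phi1) (f phi2) Lam) Lam (W b))
  (HW0 : W 0 = lam1_tilde f phih e Lam phi1 phi2).

Lemma f_attains y : f phih <= y <= 1 -> exists p, 0 <= p <= phih /\ f p = y.
Proof.
  intros Hy.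
  destruct (Req_dec y 1) as [->|H1]; [exists 0; split; [lra | exact Hf0]|].
  destruct (Req_dec y (f phih)) as [->|H2]; [exists phih; split; [lra | reflexivity]|].
  destruct (Ranalysis5.IVT_interv (fun p => y - f p) 0 phih) as [p [Hp Hfp]].
  - intros a Ha; apply continuity_pt_minus; [|now apply Hfcont].
    apply continuity_pt_const; intros ? ?; reflexivity.
  - exact Hphih.
  - rewrite Hf0; lra.
  - lra.
  - exists p; split; [exact Hp | lra].
Qed.

Lemma finv_threshold y phi : 0 <= phi <= phih ->
  (phi < finv f phih y -> y < f phi) /\ (finv f phih y <= phi -> f phi <= y).
Proof.
  intros Hphi; assert (Hf := Hfpos phi Hphi); unfold finv.
  destruct (Rlt_dec 1 y); [split; intros; lra|].
  destruct (Rlt_dec y (f phih)).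
  - split; intros; [|lra].
    destruct (Req_dec phi phih) as [->|]; [assumption|].
    assert (f phih < f phi) by (apply Hfdec; lra); lra.
  - destruct (epsilon_spec (inhabits 0) (fun p => 0 <= p <= phih /\ f p = y)
      (f_attains y ltac:(lra))) as [Hp Hfp].
    set (p := epsilon _ _) in *; split; intros Hcmp.
    + rewrite <- Hfp; apply Hfdec; lra.
    + rewrite <- Hfp; destruct (Req_dec p phi) as [->|]; [lra|].
      left; apply Hfdec; lra.
Qed.

Lemma finv_demand_threshold c phi : 0 < c -> 0 <= phi <= phih ->
  (phi < finv f phih (c / Lam) -> c < Lam * f phi) /\
  (finv f phih (c / Lam) <= phi -> Lam * f phi <= c).
Proof.
  intros Hc Hphi; destruct (finv_threshold (c / Lam) phi Hphi) as [Hlt Hge].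
  split; intros H.
  - apply Hlt in H; apply Rmult_lt_reg_r with (/ Lam); [apply Rinv_0_lt_compat; lra|].
    replace (Lam * f phi * / Lam) with (f phi) by (field; lra); exact H.
  - apply Hge in H; apply Rmult_le_reg_r with (/ Lam); [apply Rinv_0_lt_compat; lra|].
    replace (Lam * f phi * / Lam) with (f phi) by (field; lra); exact H.
Qed.

Lemma beta_zero_cases :
  (2 * e < Lam * f phi1 /\ lam1_tilde f phih e Lam phi1 phi2 = Lam / 2 /\
     M1_tilde f phih e Lam phi1 phi2 = e * phi1 /\ M2_tilde f phih e Lam phi1 phi2 = e * phi2) \/
  (phi1 = phi2 /\ Lam * f phi1 <= 2 * e /\ lam1_tilde f phih e Lam phi1 phi2 = Lam / 2 /\
     M1_tilde f phih e Lam phi1 phi2 = Lam / 2 * f phi1 * phi1 /\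
     M2_tilde f phih e Lam phi1 phi2 = Lam / 2 * f phi2 * phi2) \/
  (f phi1 < f phi2 /\ e < Lam * f phi1 <= 2 * e /\
     lam1_tilde f phih e Lam phi1 phi2 = Lam - e / f phi1 /\
     M1_tilde f phih e Lam phi1 phi2 = mfun f e Lam phi1 /\
     M2_tilde f phih e Lam phi1 phi2 = e * phi2) \/
  (f phi1 < f phi2 /\ Lam * f phi1 <= e /\ lam1_tilde f phih e Lam phi1 phi2 = 0 /\
     M1_tilde f phih e Lam phi1 phi2 = 0 /\
     M2_tilde f phih e Lam phi1 phi2 = Rmin (Lam * f phi2) e * phi2).
Proof.
  destruct (finv_demand_threshold (2 * e) phi1 ltac:(lra) Hphi1) as [Hlow_lt Hlow_ge].
  destruct (finv_demand_threshold e phi1 He Hphi1) as [Hbar_lt Hbar_ge].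
  unfold lam1_tilde, M1_tilde, M2_tilde, phi_low, phi_bar in *.
  destruct (Rlt_dec phi1 (finv f phih (2 * e / Lam))) as [Ca|Ca];
    [left; repeat split; auto|right].
  apply Rnot_lt_le in Ca; specialize (Hlow_ge Ca).
  destruct (Req_dec_T phi1 phi2) as [Cd|Cd]; [left; repeat split; auto|right].
  assert (Hf12 : f phi1 < f phi2) by (apply Hfdec; auto; lra).
  destruct (Rlt_dec phi1 (finv f phih (e / Lam))) as [Cb|Cb];
    [left; repeat split; auto|right].
  apply Rnot_lt_le in Cb; repeat split; auto.
Qed.

Lemma lam1_tilde_bounds : 0 <= lam1_tilde f phih e Lam phi1 phi2 <= Lam.
Proof.
  assert (Hf1 := Hfpos phi1 Hphi1).
  destruct beta_zero_cases as [[_ [-> _]]|[[_ [_ [-> _]]]|[[_ [Hd [-> _]]]|[_ [_ [-> _]]]]]];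
    try lra.
  assert (0 < e / f phi1) by (apply Rdiv_lt_0_compat; lra).
  assert (e / f phi1 * f phi1 = e) by (field; lra).
  split; nra.
Qed.

Lemma filterlim_wardrop_zero :
  filterlim W (locally_pos 0) (locally (lam1_tilde f phih e Lam phi1 phi2)).
Proof.
  assert (Hf1 := Hfpos phi1 Hphi1); assert (Hf2 := Hfpos phi2 Hphi2).
  assert (Hbounds := lam1_tilde_bounds).
  assert (Hfluid : forall Wl,
    sign_change_at (blocking_gap (fluid_empty_prob e) (f phi1) (f phi2) Lam) Lam Wl ->
    filterlim W (locally_pos 0) (locally Wl)).
  { intros Wl HWl.
    apply (filterlim_wardrop_split e (f phi1) (f phi2) Lam 0 (fluid_empty_prob e) W Wl He);
      [lra | lra | exact HWs | apply empty_prob_lim_zero, He | exact HWl]. }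
  destruct beta_zero_cases as
    [[Hd [Hl _]]|[[Heq [_ [Hl _]]]|[[Hf12 [Hd [Hl _]]]|[Hf12 [Hd [Hl _]]]]]]; rewrite Hl in *.
  - apply Hfluid, fluid_sign_change_high_demand; try lra.
    destruct (Req_dec phi1 phi2) as [->|]; [lra | left; apply Hfdec; lra].
  - (* Equal prices: the blocking gap vanishes at Lam / 2 for every beta > 0. *)
    subst phi2; apply (filterlim_ext_loc (fun _ => Lam / 2)); [|apply filterlim_const].
    apply locally_pos_forall; intros b Hb.
    apply (sign_change_at_unique (blocking_gap (fun x => empty_prob e x b) (f phi1) (f phi1) Lam)
      Lam); [|apply HWs, Hb].
    apply sign_change_at_of_sqr_min; [intros; apply blocking_gap_lt; lra | lra |].
    intros lam _; replace (blocking_gap _ _ _ Lam (Lam / 2)) with 0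
      by (unfold blocking_gap; replace (Lam - Lam / 2) with (Lam / 2) by field; ring).
    rewrite Rsqr_0; apply Rle_0_sqr.
  - apply Hfluid, fluid_sign_change_mid_demand; lra.
  - apply Hfluid, fluid_sign_change_low_demand; lra.
Qed.

Lemma M1_tilde_fluid : M1_tilde f phih e Lam phi1 phi2 =
  lam1_tilde f phih e Lam phi1 phi2 * f phi1 * phi1 *
  (1 - fluid_empty_prob e (lam1_tilde f phih e Lam phi1 phi2 * f phi1)).
Proof.
  assert (Hf1 := Hfpos phi1 Hphi1); assert (Hbounds := lam1_tilde_bounds).
  rewrite fluid_revenue by (try apply Rmult_le_pos; lra).
  destruct beta_zero_cases as [[Hd [-> [-> _]]]|[[_ [Hd [-> [-> _]]]]|
    [[_ [Hd [-> [-> _]]]]|[_ [_ [-> [-> _]]]]]]]; unfold Rmin, mfun.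
  - destruct (Rle_dec (Lam / 2 * f phi1) e); [lra | reflexivity].
  - destruct (Rle_dec (Lam / 2 * f phi1) e); [reflexivity | lra].
  - replace ((Lam - e / f phi1) * f phi1) with (Lam * f phi1 - e) by (field; lra).
    destruct (Rle_dec (Lam * f phi1 - e) e); [reflexivity | lra].
  - rewrite Rmult_0_l; destruct (Rle_dec 0 e); [ring | lra].
Qed.

Lemma M2_tilde_fluid : M2_tilde f phih e Lam phi1 phi2 =
  (Lam - lam1_tilde f phih e Lam phi1 phi2) * f phi2 * phi2 *
  (1 - fluid_empty_prob e ((Lam - lam1_tilde f phih e Lam phi1 phi2) * f phi2)).
Proof.
  assert (Hf1 := Hfpos phi1 Hphi1); assert (Hf2 := Hfpos phi2 Hphi2).
  assert (Hbounds := lam1_tilde_bounds).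
  rewrite fluid_revenue by (try apply Rmult_le_pos; lra).
  assert (Hf12 : f phi1 <= f phi2)
    by (destruct (Req_dec phi1 phi2) as [->|]; [lra | left; apply Hfdec; lra]).
  destruct beta_zero_cases as [[Hd [-> [_ ->]]]|[[<- [Hd [-> [_ ->]]]]|
    [[Hlt [Hd [-> [_ ->]]]]|[_ [_ [-> [_ ->]]]]]]]; unfold Rmin.
  - destruct (Rle_dec ((Lam - Lam / 2) * f phi2) e); [exfalso; nra | reflexivity].
  - destruct (Rle_dec ((Lam - Lam / 2) * f phi1) e); [field | exfalso; nra].
  - replace (Lam - (Lam - e / f phi1)) with (e / f phi1) by ring.
    assert (e / f phi1 * f phi1 = e) by (field; lra).
    assert (0 < e / f phi1) by (apply Rdiv_lt_0_compat; lra).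
    destruct (Rle_dec (e / f phi1 * f phi2) e); [nra | reflexivity].
  - rewrite Rminus_0_r; reflexivity.
Qed.

Lemma split_limits_at b0 : 0 <= b0 -> exists DL, empty_prob_lim e b0 DL /\
  0 <= W b0 <= Lam /\ filterlim W (locally_pos b0) (locally (W b0)) /\
  (if Req_dec_T b0 0 then M1_tilde f phih e Lam phi1 phi2 else Mrev f e (W b0) phi1 b0)
    = W b0 * f phi1 * phi1 * (1 - DL (W b0 * f phi1)) /\
  (if Req_dec_T b0 0 then M2_tilde f phih e Lam phi1 phi2 else Mrev f e (Lam - W b0) phi2 b0)
    = (Lam - W b0) * f phi2 * phi2 * (1 - DL ((Lam - W b0) * f phi2)).
Proof.
  intros Hb0; destruct (Req_dec_T b0 0) as [->|Hne].
  - exists (fluid_empty_prob e); rewrite HW0.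
    split; [apply empty_prob_lim_zero, He|].
    split; [apply lam1_tilde_bounds|].
    split; [apply filterlim_wardrop_zero|].
    split; [apply M1_tilde_fluid | apply M2_tilde_fluid].
  - assert (Hpos : 0 < b0) by lra; assert (HD := empty_prob_lim_pos e b0 He Hpos).
    exists (fun x => empty_prob e x b0); split; [exact HD|].
    split; [apply (HWs b0 Hpos)|].
    split; [|split; reflexivity].
    assert (Hf1 := Hfpos phi1 Hphi1); assert (Hf2 := Hfpos phi2 Hphi2).
    apply (filterlim_wardrop_split e (f phi1) (f phi2) Lam b0 (fun x => empty_prob e x b0) W);
      [exact He | lra | lra | exact HWs | exact HD | apply HWs, Hpos].
Qed.

Lemma cont_on_nonneg_split : cont_on_nonneg W.
Proof.
  apply cont_on_nonneg_of_locally_pos; intros b0 Hb0.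
  now destruct (split_limits_at b0 Hb0) as [DL [_ [_ [HW _]]]].
Qed.

Lemma cont_on_nonneg_revenue1 :
  cont_on_nonneg (fun beta => if Req_dec_T beta 0 then M1_tilde f phih e Lam phi1 phi2
                              else Mrev f e (W beta) phi1 beta).
Proof.
  assert (Hf1 := Hfpos phi1 Hphi1).
  apply cont_on_nonneg_Mrev; [lra | intros b Hb; apply (HWs b Hb) |].
  intros b0 Hb0; destruct (split_limits_at b0 Hb0) as [DL [HD [HWb0 [HW [HM1 _]]]]].
  exists DL; repeat split; auto; lra.
Qed.

Lemma cont_on_nonneg_revenue2 :
  cont_on_nonneg (fun beta => if Req_dec_T beta 0 then M2_tilde f phih e Lam phi1 phi2
                              else Mrev f e (Lam - W beta) phi2 beta).
Proof.
  assert (Hf2 := Hfpos phi2 Hphi2).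
  apply cont_on_nonneg_Mrev; [lra | intros b Hb; assert (H := proj1 (HWs b Hb)); lra |].
  intros b0 Hb0; destruct (split_limits_at b0 Hb0) as [DL [HD [HWb0 [HW [_ HM2]]]]].
  exists DL; repeat split; auto; [lra|].
  apply filterlim_Rminus; [apply filterlim_const | exact HW].
Qed.

End WardropContinuity.

Theorem theorem3
  (f : R -> R) (phih Lam e phi1 phi2 : R) (W : R -> R)
  (Hphih : 0 < phih) (HLam : 0 < Lam) (He : 0 < e)
  (Hf0 : f 0 = 1)
  (Hfpos : forall p, 0 <= p <= phih -> 0 < f p <= 1)
  (Hfdec : forall x y, 0 <= x <= phih -> 0 <= y <= phih -> x < y -> f y < f x)
  (Hfconc : forall x y t, 0 <= x <= phih -> 0 <= y <= phih -> x <> y ->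
     0 < t < 1 -> t * f x + (1 - t) * f y < f (t * x + (1 - t) * y))
  (Hfdiff : forall p, 0 <= p <= phih -> ex_derive f p)
  (Hphi1 : 0 <= phi1 <= phih) (Hphi2 : 0 <= phi2 <= phih) (H12 : phi2 <= phi1)
  (HW : forall beta, 0 < beta -> is_wardrop f e Lam phi1 phi2 beta (W beta))
  (HW0 : W 0 = lam1_tilde f phih e Lam phi1 phi2) :
  cont_on_nonneg W /\
  cont_on_nonneg (fun beta => if Req_dec_T beta 0 then M1_tilde f phih e Lam phi1 phi2
                              else Mrev f e (W beta) phi1 beta) /\
  cont_on_nonneg (fun beta => if Req_dec_T beta 0 then M2_tilde f phih e Lam phi1 phi2
                              else Mrev f e (Lam - W beta) phi2 beta).
Proof.
  assert (Hfcont : forall p, 0 <= p <= phih -> continuity_pt f p)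
    by (intros p Hp; apply continuity_pt_filterlim,
          (@ex_derive_continuous R_AbsRing R_NormedModule), Hfdiff, Hp).
  assert (HWs : forall b, 0 < b -> sign_change_at
      (blocking_gap (fun x => empty_prob e x b) (f phi1) (f phi2) Lam) Lam (W b)).
  { intros b Hb; apply sign_change_at_wardrop; auto; apply Hfpos; assumption. }
  split; [|split].
  - apply (cont_on_nonneg_split f phih Lam e phi1 phi2); auto.
  - apply (cont_on_nonneg_revenue1 f phih Lam e phi1 phi2); auto.
  - apply (cont_on_nonneg_revenue2 f phih Lam e phi1 phi2); auto.
Qed.
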